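(* Let $\mathcal{H}$ be a real Hilbert space with orthonormal basis $(\varphi_\gamma)_{\gamma\in\Gamma}$, let $g\in\mathcal{H}$, let $n\in\mathbb{N}$, and for $1\le i\le n$ let $1\le p_i\le 2$ and let $W_i=(w_{i,\gamma})_{\gamma\in\Gamma}$ be a sequence of strictly positive weights. Define $$\Phi:\mathcal{H}\to\mathbb{R}\cup\{+\infty\},\qquad \Phi(f)=\|f-g\|_{\mathcal{H}}^2+\sum_{i=1}^n |||f|||_{W_i,p_i}^{p_i},\qquad |||f|||_{W_i,p_i}=\Big(\sum_{\gamma\in\Gamma}w_{i,\gamma}|\langle f,\varphi_\gamma\rangle|^{p_i}\Big)^{1/p_i}.$$ For each $\gamma\in\Gamma$, write $g_\gamma=\langle g,\varphi_\gamma\rangle$ and let $S_{(w_{1,\gamma},\dots,w_{n,\gamma}),(p_1,\dots,p_n)}(g_\gamma)$ denote the minimizer of the function $M_\gamma:\mathbb{R}\to\mathbb{R}$, $M_\gamma(x)=x^2+g_\gamma^2-2g_\gamma x+w_{1,\gamma}|x|^{p_1}+\dots+w_{n,\gamma}|x|^{p_n}$. Then $$f_m=\sum_{\gamma\in\Gamma}S_{(w_{1,\gamma},\dots,w_{n,\gamma}),(p_1,\dots,p_n)}(g_\gamma)\,\varphi_\gamma$$ is a minimizer of $\Phi$.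
   Context: Inner products $\langle f,\varphi_\gamma\rangle$ are real. *)

From HB Require Import structures.
From mathcomp Require Import all_boot all_order all_algebra finmap.
From mathcomp Require Import all_classical all_reals all_analysis.
Set Implicit Arguments. Unset Strict Implicit. Unset Printing Implicit Defensive.
Import Order.TTheory GRing.Theory Num.Theory.
Import numFieldNormedType.Exports.
Local Open Scope classical_set_scope.
Local Open Scope ring_scope.

(* Filter of finite subsets of I ordered by inclusion (unordered sums),
   as in mathcomp-analysis showcase/summability.v *)
Definition totally {I : choiceType} : set_system {fset I} :=
  filter_from setT (fun A => [set B | (A `<=` B)%fset]).

Instance totally_filter {I : choiceType} : ProperFilter (@totally I).
Proof.
eapply filter_from_proper; last by move=> A _; exists A; rewrite /= fsubset_refl.
apply: filter_fromT_filter; first by exists fset0.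
by move=> A B /=; exists (A `|` B)%fset => P /=; rewrite fsubUset => /andP[].
Qed.

Definition partial_sum {I : choiceType} {V : zmodType}
  (x : I -> V) (A : {fset I}) : V := \sum_(i : A) x (val i).

Definition inner_product (R : realType) (V : normedModType R) (ip : V -> V -> R) :=
  [/\ forall x y, ip x y = ip y x,
      forall (a : R) x y z, ip (a *: x + y) z = a * ip x z + ip y z
    & forall x, `|x| ^+ 2 = ip x x].

Definition orthonormal_basis (R : realType) (V : normedModType R)
  (ip : V -> V -> R) (G : choiceType) (phi : G -> V) :=
  (forall a b, ip (phi a) (phi b) = (a == b)%:R) /\
  (forall f, (forall a, ip f (phi a) = 0) -> f = 0).

Definition wnorm_p (R : realType) (V : normedModType R) (ip : V -> V -> R)
  (G : choiceType) (phi : G -> V) (w : G -> R) (p : R) (f : V) : \bar R :=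
  \esum_(c in [set: G]) ((w c * (`|ip f (phi c)| `^ p))%:E).

Definition Phi (R : realType) (V : normedModType R) (ip : V -> V -> R)
  (G : choiceType) (phi : G -> V) (g : V) (n : nat)
  (p : 'I_n -> R) (w : 'I_n -> G -> R) (f : V) : \bar R :=
  ((`|f - g| ^+ 2)%:E + \sum_(i < n) wnorm_p ip phi (w i) (p i) f)%E.

Definition Mfun (R : realType) (n : nat) (wc : 'I_n -> R) (p : 'I_n -> R)
  (gc : R) (x : R) : R :=
  x ^+ 2 + gc ^+ 2 - 2 * gc * x + \sum_(i < n) wc i * (`|x| `^ p i).

From HB Require Import structures.
From mathcomp Require Import all_boot all_order all_algebra finmap.
From mathcomp Require Import all_classical all_reals all_analysis.
From mathcomp Require Import ring lra.
Set Implicit Arguments. Unset Strict Implicit. Unset Printing Implicit Defensive.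
Import Order.TTheory GRing.Theory Num.Theory.
Import numFieldNormedType.Exports.
Local Open Scope classical_set_scope.
Local Open Scope ring_scope.

(* By Parseval, Phi f is the unconditional sum over c of M_c(<f, phi_c>), a sum
   of nonnegative terms, so it is minimised coordinatewise by the coefficients
   S c.  The only issue is that these coefficients define a vector at all:
   comparing M_c(S c) with M_c(0) gives (S c)^2 <= 4 g_c^2, so (S c) is square
   summable by Bessel's inequality, and its partial sums form a Cauchy net in
   the complete space H. *)

Section InnerProduct.
Variables (R : realType) (V : normedModType R) (ip : V -> V -> R).
Hypothesis ipP : inner_product ip.

Lemma ipC x y : ip x y = ip y x. Proof. by case: ipP. Qed.

Lemma ipxx x : ip x x = `|x| ^+ 2. Proof. by case: ipP. Qed.

Lemma ipDl x y z : ip (x + y) z = ip x z + ip y z.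
Proof. by case: ipP => _ /(_ 1 x y z) + _; rewrite scale1r mul1r. Qed.

Lemma ip0l z : ip 0 z = 0.
Proof. by have := ipDl 0 0 z; rewrite addr0; lra. Qed.

Lemma ipZl a x z : ip (a *: x) z = a * ip x z.
Proof. by case: ipP => _ /(_ a x 0 z) + _; rewrite !addr0 ip0l addr0. Qed.

Lemma ipBl x y z : ip (x - y) z = ip x z - ip y z.
Proof. by rewrite ipDl -scaleN1r ipZl mulN1r. Qed.

Lemma ipBr x y z : ip z (x - y) = ip z x - ip z y.
Proof. by rewrite ipC ipBl ipC (ipC y). Qed.

Lemma ip_suml (I : Type) (s : seq I) (F : I -> V) z :
  ip (\sum_(i <- s) F i) z = \sum_(i <- s) ip (F i) z.
Proof.
elim: s => [|i s IHs]; first by rewrite !big_nil ip0l.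
by rewrite !big_cons ipDl IHs.
Qed.

End InnerProduct.

Lemma big_fset_subset {R : Type} {idx : R} {op : Monoid.com_law idx}
    {I : choiceType} (F : I -> R) {A B : {fset I}} : (A `<=` B)%fset ->
  \big[op/idx]_(i <- B) F i =
    op (\big[op/idx]_(i <- A) F i) (\big[op/idx]_(i <- [fset x in B | x \notin A]%fset) F i).
Proof.
move=> AB; rewrite (big_fsetID _ (mem A)); congr (op _ _); apply: eq_fbigl => x.
by rewrite !inE /= andbC; apply/andP/idP => [[]//|xA]; rewrite (fsubsetP AB).
Qed.

Section OrthonormalFamily.
Variables (R : realType) (V : normedModType R) (ip : V -> V -> R).
Hypothesis ipP : inner_product ip.
Variables (G : choiceType) (phi : G -> V).
Hypothesis phi_orthonormal : forall a b, ip (phi a) (phi b) = (a == b)%:R.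

Definition coef (h : V) (c : G) : R := ip h (phi c).

Definition psum (a : G -> R) : {fset G} -> V :=
  partial_sum (fun c => a c *: phi c).

Lemma psumE a A : psum a A = \sum_(i <- A) a i *: phi i.
Proof. by rewrite /psum /partial_sum (big_seq_fsetE _ _ xpredT). Qed.

Lemma psum_subset a A B : (A `<=` B)%fset ->
  psum a B = psum a A + psum a [fset x in B | x \notin A]%fset.
Proof. by move=> AB; rewrite !psumE (big_fset_subset _ AB). Qed.

Lemma ip_psuml a A y : ip (psum a A) y = \sum_(i <- A) a i * ip (phi i) y.
Proof. by rewrite psumE (ip_suml ipP); under eq_bigr do rewrite (ipZl ipP). Qed.

Lemma coef_psum a A c : coef (psum a A) c = if c \in A then a c else 0.
Proof.
rewrite /coef ip_psuml; under eq_bigr do rewrite phi_orthonormal.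
case: ifPn => cA; last first.
  by rewrite big_seq big1 // => i iA; case: eqP iA cA => [->->|]; rewrite ?mulr0.
rewrite (big_fsetD1 c) //= eqxx mulr1 big_seq big1 ?addr0 // => i.
by rewrite !inE => /andP[/negPf -> _]; rewrite mulr0.
Qed.

Lemma psum_norm a A : `|psum a A| ^+ 2 = \sum_(i <- A) a i ^+ 2.
Proof.
rewrite -(ipxx ipP) ip_psuml big_seq [RHS]big_seq; apply: eq_bigr => i iA.
by rewrite (ipC ipP) -/(coef _ i) coef_psum iA expr2.
Qed.

Lemma bessel h (A : {fset G}) : \sum_(i <- A) coef h i ^+ 2 <= `|h| ^+ 2.
Proof.
have ip_h_psum : ip h (psum (coef h) A) = \sum_(i <- A) coef h i ^+ 2.
  by rewrite (ipC ipP) ip_psuml; apply: eq_bigr => i _; rewrite (ipC ipP) expr2.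
have := sqr_ge0 `|h - psum (coef h) A|.
rewrite -(ipxx ipP (h - _)) (ipBl ipP) !(ipBr ipP) !(ipxx ipP) (ipC ipP _ h).
rewrite ip_h_psum psum_norm.
lra.
Qed.

Lemma norm_coef_le h c : `|coef h c| <= `|h|.
Proof.
rewrite -(ler_pXn2r (_ : 0 < 2)%N) ?nnegrE // real_normK ?num_real //.
by have := (bessel h [fset c])%fset; rewrite big_seq_fset1.
Qed.

Lemma coef_psum_lim a l : psum a @ totally --> l -> forall c, coef l c = a c.
Proof.
move=> /cvgrPdist_lt psum_l c; apply/eqP; rewrite -subr_eq0 -normr_le0.
apply/ler_addgt0Pr => e e0; rewrite add0r.
have [A _ near_l] := psum_l e e0.
have /ltW := near_l _ (fsubsetUr [fset c]%fset A); apply: le_trans.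
have := coef_psum a (c |` A)%fset c; rewrite fset1U1 => <-.
by rewrite /coef -(ipBl ipP); apply: norm_coef_le.
Qed.

Lemma psum_cauchy a K : (forall A : {fset G}, \sum_(i <- A) a i ^+ 2 <= K) ->
  forall e, 0 < e -> exists A : {fset G},
    forall B, (A `<=` B)%fset -> `|psum a A - psum a B| < e.
Proof.
move=> sumK e e0.
pose E := [set \sum_(i <- A) a i ^+ 2 | A in [set: {fset G}]].
have supE : has_sup E.
  split; first by exists (\sum_(i <- fset0) a i ^+ 2); exists fset0.
  by exists K => _ [A _ <-].
have [_ [A _ <-] close_sup] := sup_adherent (mulr_gt0 e0 e0) supE.
exists A => B AB; set D := [fset x in B | x \notin A]%fset.
have sumB_le : \sum_(i <- B) a i ^+ 2 <= sup E.
  by apply: ub_le_sup; [exact: supE.2 | exists B].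
have := psum_norm a D; rewrite (big_fset_subset _ AB) /= in sumB_le.
rewrite (psum_subset a AB) opprD addrA subrr add0r normrN.
have := normr_ge0 (psum a D); nra.
Qed.

End OrthonormalFamily.

Lemma powR0_le (R : realType) (x p : R) : 0 `^ p <= x `^ p.
Proof.
have [->|p0] := eqVneq p 0; first by rewrite !powRr0.
by rewrite powR0 // powR_ge0.
Qed.

Lemma Mfun_le_Mfun0_sqr (R : realType) (n : nat) (wc p : 'I_n -> R) (gc s : R) :
  (forall i, 0 <= wc i) -> Mfun wc p gc s <= Mfun wc p gc 0 ->
  s ^+ 2 <= 4 * gc ^+ 2.
Proof.
move=> wc0; rewrite /Mfun normr0.
have : \sum_(i < n) wc i * (0 `^ p i) <= \sum_(i < n) wc i * (`|s| `^ p i).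
  by apply: ler_sum => i _; rewrite ler_wpM2l // powR0_le.
nra.
Qed.

Section CompleteOrthonormalBasis.
Variables (R : realType) (H : completeNormedModType R) (ip : H -> H -> R).
Hypothesis ipP : inner_product ip.
Variables (G : choiceType) (phi : G -> H).
Hypothesis phiP : orthonormal_basis ip phi.

Let phi_orthonormal := phiP.1.

Lemma psum_cvg a K : (forall A : {fset G}, \sum_(i <- A) a i ^+ 2 <= K) ->
  cvg (psum phi a @ totally).
Proof.
move=> sumK; apply: cauchy_cvg; apply: cauchy_exP => e e0.
have [A near_A] := psum_cauchy ipP phi_orthonormal sumK e0.
by exists (psum phi a A), A => // B /= AB; rewrite -ball_normE; apply: near_A.
Qed.

Lemma psum_coef_cvg h : psum phi (coef ip phi h) @ totally --> h.
Proof.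
have psum_l := psum_cvg (bessel ipP phi_orthonormal h).
suff lim_h : lim (psum phi (coef ip phi h) @ totally) = h.
  by rewrite -[X in _ --> X]lim_h.
apply/eqP; rewrite -subr_eq0; apply/eqP/phiP.2 => c.
have := coef_psum_lim ipP phi_orthonormal psum_l c.
by rewrite (ipBl ipP) /coef => ->; rewrite subrr.
Qed.

Lemma parseval h : \esum_(c in [set: G]) (coef ip phi h c ^+ 2)%:E = (`|h| ^+ 2)%:E.
Proof.
apply/eqP; rewrite eq_le; apply/andP; split.
  apply: ge_ereal_sup => _ [X [finX _] <-].
  by rewrite fsbig_finite //= sumEFin lee_fin bessel.
have sum_le_esum (B : {fset G}) : ((\sum_(i <- B) coef ip phi h i ^+ 2)%:E <=
    \esum_(c in [set: G]) (coef ip phi h c ^+ 2)%:E)%E.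
  apply: esum_ge; exists [set` B]; first by split => //; exact: finite_fset.
  by rewrite fsbig_finite ?finite_fset // set_fsetK sumEFin.
case: (esum _ _) sum_le_esum => [r sum_le_esum| _ |/(_ fset0)];
  [|exact: leey|by rewrite big_nil].
have norm2_cvg : (fun B => `|psum phi (coef ip phi h) B| ^+ 2) @ totally
    --> `|h| ^+ 2.
  by rewrite expr2; apply: cvgM; apply: cvg_norm; apply: psum_coef_cvg.
rewrite lee_fin; apply: (cvgr_to_le norm2_cvg); apply: nearW => B.
by rewrite (psum_norm ipP phi_orthonormal) -lee_fin.
Qed.

Lemma Phi_esum_Mfun (g : H) (n : nat) (p : 'I_n -> R) (w : 'I_n -> G -> R) f :
  (forall i c, 0 <= w i c) ->
  Phi ip phi g p w f = \esum_(c in [set: G])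
    (Mfun (fun i => w i c) p (coef ip phi g c) (coef ip phi f c))%:E.
Proof.
move=> w0; have wpow0 i c x : (0 <= (w i c * x `^ p i)%:E)%E.
  by rewrite lee_fin mulr_ge0 ?powR_ge0.
rewrite /Phi /wnorm_p -parseval -esum_sum; last by move=> c i _ _; exact: wpow0.
rewrite -esumD; last 2 first.
- by move=> c _; rewrite lee_fin sqr_ge0.
- by move=> c _; apply: sume_ge0 => i _; exact: wpow0.
apply: eq_esum => c _; rewrite sumEFin -EFinD /Mfun /coef (ipBl ipP).
congr (_%:E); ring.
Qed.

End CompleteOrthonormalBasis.

Theorem lemma1p1 (R : realType) (H : completeNormedModType R)
  (ip : H -> H -> R) (G : choiceType) (phi : G -> H) (g : H) (n : nat)
  (p : 'I_n -> R) (w : 'I_n -> G -> R) (S : G -> R) :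
  inner_product ip ->
  orthonormal_basis ip phi ->
  (forall i, 1 <= p i <= 2) ->
  (forall i c, 0 < w i c) ->
  (* S c is the minimizer of M_c, with g_c = <g, phi_c> *)
  (forall c x, Mfun (fun i => w i c) p (ip g (phi c)) (S c)
               <= Mfun (fun i => w i c) p (ip g (phi c)) x) ->
  exists fm : H,
    partial_sum (fun c => S c *: phi c) @ totally --> fm /\
    forall f : H, (Phi ip phi g p w fm <= Phi ip phi g p w f)%E.
Proof.
(* The bounds on the exponents only matter for the existence of S. *)
move=> ipP phiP _ w_gt0 S_min.
have w0 i c : 0 <= w i c by exact/ltW.
have S_sqr_le c : S c ^+ 2 <= 4 * coef ip phi g c ^+ 2.
  exact: Mfun_le_Mfun0_sqr (fun i => w0 i c) (S_min c 0).
have S_sum_le (A : {fset G}) : \sum_(i <- A) S i ^+ 2 <= 4 * `|g| ^+ 2.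
  rewrite (le_trans (ler_sum _ (fun i _ => S_sqr_le i))) // -mulr_sumr.
  by rewrite ler_pM2l // (bessel ipP phiP.1).
have psum_S := psum_cvg ipP phiP S_sum_le.
exists (lim (psum phi S @ totally)); split => [|f]; first exact: psum_S.
rewrite !(Phi_esum_Mfun ipP phiP _ _ _ w0); apply: le_esum => c _.
by rewrite lee_fin (coef_psum_lim ipP phiP.1 psum_S).
Qed.
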